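(* In the category of transition systems labelled on an alphabet $\Sigma$, a monomorphism $m:S\to X$ is strong if and only if it defines an induced subgraph of $X$, i.e., every arc of $X$ (with any label) whose source and target both lie in the image of $m$ lies in the image of $m$. Equivalently, the strong subobjects of a transition system are those obtained by removing a subset of its states (together with all arcs incident to them).
   Context: A graph has a set of nodes (states), a set of arcs (transitions) and source/target maps; a transition system labelled on $\Sigma$ is a graph whose arcs are labelled by elements of $\Sigma$ such that for every pair of nodes $x,y$ and every $\alpha\in\Sigma$ there is at most one arc from $x$ to $y$ labelled $\alpha$. Morphisms of transition systems are maps of nodes and arcs preserving source, target and label. A monomorphism $m:X\to Y$ is strong if for every commutative square $m\circ f = g\circ e$ with $e:X'\to Y'$ an epimorphism, $f:X'\to X$, $g:Y'\to Y$, there exists a (necessarily unique) $d:Y'\to X$ with $d\circ e=f$ and $m\circ d=g$. *)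

Set Implicit Arguments.

Record TS (Sigma : Type) := {
  node : Type;
  arc : Type;
  src : arc -> node;
  tgt : arc -> node;
  lab : arc -> Sigma;
  ts_simple : forall a b : arc,
      src a = src b -> tgt a = tgt b -> lab a = lab b -> a = b
}.

Arguments node {Sigma} _.
Arguments arc {Sigma} _.
Arguments src {Sigma} _ _.
Arguments tgt {Sigma} _ _.
Arguments lab {Sigma} _ _.

Record Hom (Sigma : Type) (X Y : TS Sigma) := {
  vmap : node X -> node Y;
  amap : arc X -> arc Y;
  hom_src : forall a, src Y (amap a) = vmap (src X a);
  hom_tgt : forall a, tgt Y (amap a) = vmap (tgt X a);
  hom_lab : forall a, lab Y (amap a) = lab X a
}.

Arguments vmap {Sigma X Y} _ _.
Arguments amap {Sigma X Y} _ _.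

Definition hom_eq (Sigma : Type) (X Y : TS Sigma) (f g : Hom X Y) : Prop :=
  (forall x, vmap f x = vmap g x) /\ (forall a, amap f a = amap g a).

Definition comp (Sigma : Type) (X Y Z : TS Sigma) (g : Hom Y Z) (f : Hom X Y)
  : Hom X Z.
Proof.
  refine {| vmap := fun x => vmap g (vmap f x);
            amap := fun a => amap g (amap f a) |}.
  - intro a. rewrite (hom_src g), (hom_src f). reflexivity.
  - intro a. rewrite (hom_tgt g), (hom_tgt f). reflexivity.
  - intro a. rewrite (hom_lab g), (hom_lab f). reflexivity.
Defined.

Definition is_mono (Sigma : Type) (X Y : TS Sigma) (m : Hom X Y) : Prop :=
  forall (W : TS Sigma) (f g : Hom W X), hom_eq (comp m f) (comp m g) -> hom_eq f g.

Definition is_epi (Sigma : Type) (X Y : TS Sigma) (e : Hom X Y) : Prop :=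
  forall (Z : TS Sigma) (f g : Hom Y Z), hom_eq (comp f e) (comp g e) -> hom_eq f g.

Definition is_strong_mono (Sigma : Type) (X Y : TS Sigma) (m : Hom X Y) : Prop :=
  is_mono m /\
  forall (X' Y' : TS Sigma) (e : Hom X' Y') (f : Hom X' X) (g : Hom Y' Y),
    is_epi e -> hom_eq (comp m f) (comp g e) ->
    exists d : Hom Y' X, hom_eq (comp d e) f /\ hom_eq (comp m d) g.

Definition induced (Sigma : Type) (X Y : TS Sigma) (m : Hom X Y) : Prop :=
  forall a : arc Y,
    (exists s, vmap m s = src Y a) ->
    (exists t, vmap m t = tgt Y a) ->
    exists b, amap m b = a.

(* Monomorphisms are injective on nodes and epimorphisms are exactly the maps
   surjective on nodes, since arcs of a transition system are determined by
   their source, target and label.  If [m] is induced, the diagonal of a square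
   against an epimorphism is read off through [m]: nodes of the codomain are
   hit by [m] thanks to surjectivity, and arcs between such nodes by
   inducedness.  Conversely, an arc of [X] between image nodes but outside the
   image can be adjoined to [S]; the inclusion of [S] into the enlarged system
   is bijective on nodes, hence epi, and the resulting square has no diagonal. *)

From Stdlib Require Import Classical ClassicalEpsilon PropExtensionality.
Set Implicit Arguments.

Section Morphisms.
Variable Sigma : Type.

Lemma hom_eq_of_vmap (X Y : TS Sigma) (f g : Hom X Y) :
  (forall x, vmap f x = vmap g x) -> hom_eq f g.
Proof.
  intros Hv. split; [exact Hv|]. intros a. apply (ts_simple Y).
  - rewrite !hom_src. apply Hv.
  - rewrite !hom_tgt. apply Hv.
  - rewrite !hom_lab. reflexivity.
Qed.

Definition id_hom (S : TS Sigma) : Hom S S.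
Proof. refine {| vmap := fun x => x; amap := fun b => b |}; reflexivity. Defined.

Definition point_ts : TS Sigma.
Proof.
  refine {| node := unit; arc := Empty_set;
            src := fun a => match a with end; tgt := fun a => match a with end;
            lab := fun a => match a with end |}.
  intros [].
Defined.

Definition point_hom (S : TS Sigma) (s : node S) : Hom point_ts S.
Proof.
  refine {| vmap := fun _ => s; amap := fun a : arc point_ts => match a with end |};
    intros [].
Defined.

Lemma mono_vmap_inj (S X : TS Sigma) (m : Hom S X) :
  is_mono m -> forall x y, vmap m x = vmap m y -> x = y.
Proof.
  intros Hm x y E.
  destruct (Hm point_ts (point_hom S x) (point_hom S y)) as [Hv _].
  - apply hom_eq_of_vmap. intros []. exact E.
  - exact (Hv tt).
Qed.

Definition codiscrete_ts (V : Type) : TS Sigma.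
Proof.
  refine {| node := V; arc := (V * V * Sigma)%type;
            src := fun c => fst (fst c); tgt := fun c => snd (fst c);
            lab := fun c => snd c |}.
  intros [[? ?] ?] [[? ?] ?]; simpl; intros; subst; reflexivity.
Defined.

Definition codiscrete_hom (Y : TS Sigma) (V : Type) (h : node Y -> V) :
  Hom Y (codiscrete_ts V).
Proof.
  refine {| vmap := (h : node Y -> node (codiscrete_ts V));
            amap := (fun a => (h (src Y a), h (tgt Y a), lab Y a))
                    : arc Y -> arc (codiscrete_ts V) |};
    reflexivity.
Defined.

(* Maps into the codiscrete system on [Prop] classify predicates on nodes. *)
Lemma epi_vmap_surj (X Y : TS Sigma) (e : Hom X Y) :
  is_epi e -> forall y, exists x, vmap e x = y.
Proof.
  intros He y.
  destruct (He _ (codiscrete_hom Y (fun _ => True))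
                 (codiscrete_hom Y (fun y => exists x, vmap e x = y))) as [Hv _].
  - apply hom_eq_of_vmap. intros x. simpl.
    apply propositional_extensionality. split; eauto.
  - simpl in Hv. rewrite <- (Hv y). exact I.
Qed.

Lemma vmap_surj_epi (X Y : TS Sigma) (e : Hom X Y) :
  (forall y, exists x, vmap e x = y) -> is_epi e.
Proof.
  intros Hs Z f g [Hv _]. apply hom_eq_of_vmap. intros y.
  destruct (Hs y) as [x <-]. exact (Hv x).
Qed.

End Morphisms.

Section Diagonal.
Variables (Sigma : Type) (S X : TS Sigma) (m : Hom S X).
Hypothesis m_inj : forall x y, vmap m x = vmap m y -> x = y.
Hypothesis m_induced : induced m.
Variables (X' Y' : TS Sigma) (e : Hom X' Y') (f : Hom X' S) (g : Hom Y' X).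
Hypothesis e_epi : is_epi e.
Hypothesis square : hom_eq (comp m f) (comp g e).

Lemma g_vmap_in_image y : exists s, vmap m s = vmap g y.
Proof.
  destruct (epi_vmap_surj e_epi y) as [x <-]. exists (vmap f x).
  exact (proj1 square x).
Qed.

Definition diag_vmap (y : node Y') : node S :=
  proj1_sig (constructive_indefinite_description _ (g_vmap_in_image y)).

Lemma diag_vmapK y : vmap m (diag_vmap y) = vmap g y.
Proof. exact (proj2_sig (constructive_indefinite_description _ (g_vmap_in_image y))). Qed.

Lemma g_amap_in_image a : exists b, amap m b = amap g a.
Proof.
  apply m_induced.
  - exists (diag_vmap (src Y' a)). rewrite diag_vmapK, hom_src. reflexivity.
  - exists (diag_vmap (tgt Y' a)). rewrite diag_vmapK, hom_tgt. reflexivity.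
Qed.

Definition diag_amap (a : arc Y') : arc S :=
  proj1_sig (constructive_indefinite_description _ (g_amap_in_image a)).

Lemma diag_amapK a : amap m (diag_amap a) = amap g a.
Proof. exact (proj2_sig (constructive_indefinite_description _ (g_amap_in_image a))). Qed.

Definition diag : Hom Y' S.
Proof.
  refine {| vmap := diag_vmap; amap := diag_amap |}; intros a.
  - apply m_inj. rewrite diag_vmapK, <- hom_src, diag_amapK, hom_src. reflexivity.
  - apply m_inj. rewrite diag_vmapK, <- hom_tgt, diag_amapK, hom_tgt. reflexivity.
  - rewrite <- (hom_lab m), diag_amapK, hom_lab. reflexivity.
Defined.

Lemma induced_diagonal :
  exists d : Hom Y' S, hom_eq (comp d e) f /\ hom_eq (comp m d) g.
Proof.
  exists diag. split; apply hom_eq_of_vmap; simpl.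
  - intros x. apply m_inj. rewrite diag_vmapK. symmetry. exact (proj1 square x).
  - exact diag_vmapK.
Qed.

End Diagonal.

Section AdjoinArc.
Variables (Sigma : Type) (S X : TS Sigma) (m : Hom S X).
Variables (a : arc X) (s t : node S).
Hypothesis s_src : vmap m s = src X a.
Hypothesis t_tgt : vmap m t = tgt X a.
Hypothesis a_not_in_image : forall b, amap m b <> a.

Definition adjoin_src (c : option (arc S)) : node S :=
  match c with Some b => src S b | None => s end.
Definition adjoin_tgt (c : option (arc S)) : node S :=
  match c with Some b => tgt S b | None => t end.
Definition adjoin_lab (c : option (arc S)) : Sigma :=
  match c with Some b => lab S b | None => lab X a end.

Lemma no_parallel_arc b :
  src S b = s -> tgt S b = t -> lab S b = lab X a -> False.
Proof.
  intros Es Et El. apply (a_not_in_image b). apply (ts_simple X).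
  - rewrite hom_src, Es. exact s_src.
  - rewrite hom_tgt, Et. exact t_tgt.
  - rewrite hom_lab. exact El.
Qed.

(* [None] is the adjoined copy of [a], from [s] to [t]. *)
Definition adjoin_ts : TS Sigma.
Proof.
  refine {| node := node S; arc := option (arc S);
            src := adjoin_src; tgt := adjoin_tgt; lab := adjoin_lab |}.
  intros [b|] [b'|]; simpl; intros Es Et El.
  - f_equal. apply (ts_simple S); assumption.
  - exfalso. apply (no_parallel_arc b); assumption.
  - exfalso. apply (no_parallel_arc b'); symmetry; assumption.
  - reflexivity.
Defined.

Definition adjoin_incl : Hom S adjoin_ts.
Proof.
  refine {| vmap := (fun x => x) : node S -> node adjoin_ts;
            amap := (@Some _) : arc S -> arc adjoin_ts |};
    reflexivity.
Defined.

Definition adjoin_extend : Hom adjoin_ts X.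
Proof.
  refine {| vmap := (vmap m : node adjoin_ts -> node X);
            amap := fun c : arc adjoin_ts =>
                      match c with Some b => amap m b | None => a end |};
    intros [b|]; simpl; auto using hom_src, hom_tgt, hom_lab.
Defined.

Lemma missing_arc_not_strong : ~ is_strong_mono m.
Proof.
  intros [_ Hfill].
  assert (Hepi : is_epi adjoin_incl) by (apply vmap_surj_epi; intros y; exists y; reflexivity).
  assert (Hsq : hom_eq (comp m (id_hom S)) (comp adjoin_extend adjoin_incl))
    by (apply hom_eq_of_vmap; reflexivity).
  destruct (Hfill _ _ _ _ _ Hepi Hsq) as [d [_ [_ Hd]]].
  exact (a_not_in_image _ (Hd None)).
Qed.

End AdjoinArc.

Theorem theorem7 (Sigma : Type) (S X : TS Sigma) (m : Hom S X) :
  is_mono m -> (is_strong_mono m <-> induced m).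
Proof.
  intros Hm. split.
  - intros Hstrong a [s Hs] [t Ht].
    apply NNPP. intros Hn.
    apply (missing_arc_not_strong s t Hs Ht); [|exact Hstrong].
    intros b Eb. apply Hn. eauto.
  - intros Hind. split; [exact Hm|].
    intros X' Y' e f g He Hsq.
    exact (induced_diagonal (mono_vmap_inj Hm) Hind He Hsq).
Qed.
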